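(* Let $G\in\mathfrak{Y}_n$. (1) Every proper subnormal subgroup of $G$ is abelian. (2) If $G$ is not perfect (i.e. $G'\neq G$), then $G$ is metabelian.
   Context: $\mathfrak{Y}_n$ denotes the class of all groups $G$ (finite or infinite) such that $N_G(A)=A$ for every non-abelian subgroup $A\le G$. A group is metabelian if its derived subgroup is abelian. *)

From Stdlib Require Import Arith.

Record group := Group {
  carrier :> Type;
  mul : carrier -> carrier -> carrier;
  inv : carrier -> carrier;
  one : carrier;
  mulA : forall x y z, mul x (mul y z) = mul (mul x y) z;
  mul1g : forall x, mul one x = x;
  mulVg : forall x, mul (inv x) x = one
}.

Section Defs.
Variable G : group.

Definition subset := G -> Prop.

Definition is_subgroup (H : subset) : Prop :=
  H (one G) /\
  (forall x y, H x -> H y -> H (mul G x y)) /\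
  (forall x, H x -> H (inv G x)).

Definition whole : subset := fun _ => True.

Definition conj (g x : G) : G := mul G (mul G g x) (inv G g).

Definition commutator (x y : G) : G :=
  mul G (mul G (inv G x) (inv G y)) (mul G x y).

Definition abelian_set (A : subset) : Prop :=
  forall x y, A x -> A y -> mul G x y = mul G y x.

Definition normalizer (A : subset) : subset :=
  fun g => forall x, A x <-> A (conj g x).

Definition normal_in (H K : subset) : Prop :=
  is_subgroup H /\ is_subgroup K /\ (forall x, H x -> K x) /\
  (forall k h, K k -> H h -> H (conj k h)).

Definition subnormal (H : subset) : Prop :=
  exists (n : nat) (C : nat -> subset),
    (forall x, C 0 x <-> H x) /\
    (forall x, C n x) /\
    (forall i, i < n -> normal_in (C i) (C (S i))).

Definition proper (H : subset) : Prop := exists g, ~ H g.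

Definition derived : subset :=
  fun x => forall S, is_subgroup S -> (forall a b, S (commutator a b)) -> S x.

Definition perfect : Prop := forall x, derived x.

Definition metabelian : Prop := abelian_set derived.

Definition in_Yn : Prop :=
  forall A, is_subgroup A -> ~ abelian_set A ->
    forall g, normalizer A g <-> A g.

End Defs.

(** A non-abelian subgroup of a group in the class Y_n is self-normalising, so
    it cannot be a proper normal subgroup of any subgroup.  Along a subnormal
    chain starting at a non-abelian subgroup H every term therefore equals H,
    and H is the whole group.  For the second part, G' is normal in G, hence
    subnormal, and proper when G is not perfect; so G' is abelian. *)
From Stdlib Require Import Classical Lia.

Section GroupLaws.
Variable G : group.

Lemma mulgV (x : G) : mul G x (inv G x) = one G.
Proof.
  rewrite <- (mul1g G (mul G x (inv G x))), <- (mulVg G (inv G x)) at 1.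
  rewrite <- mulA, (mulA G (inv G x) x (inv G x)), mulVg, mul1g.
  apply mulVg.
Qed.

Lemma mulg1 (x : G) : mul G x (one G) = x.
Proof. rewrite <- (mulVg G x), mulA, mulgV. apply mul1g. Qed.

Lemma invgK (x : G) : inv G (inv G x) = x.
Proof.
  rewrite <- (mulg1 (inv G (inv G x))), <- (mulVg G x), mulA, mulVg.
  apply mul1g.
Qed.

Lemma conjVK (k x : G) : conj G (inv G k) (conj G k x) = x.
Proof.
  unfold conj. rewrite invgK, !mulA, mulVg, mul1g, <- mulA, mulVg.
  apply mulg1.
Qed.

Lemma conjg_mulR (k h : G) :
  conj G k h = mul G h (commutator G h (inv G k)).
Proof. unfold conj, commutator. rewrite invgK, !mulA, mulgV, mul1g. reflexivity. Qed.

End GroupLaws.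

Section Subgroups.
Variable G : group.
Implicit Types A B : subset G.

Lemma normal_in_normalizer A B g :
  normal_in G A B -> B g -> normalizer G A g.
Proof.
  intros [_ [[_ [_ invB]] [_ conjB]]] Bg x; split.
  - intro Ax. now apply conjB.
  - intro Agx. rewrite <- (conjVK G g x). apply conjB; [now apply invB | exact Agx].
Qed.

Lemma normalizer_ext A B g :
  (forall x, A x <-> B x) -> normalizer G A g -> normalizer G B g.
Proof. intros eqAB NAg x. rewrite <- !eqAB. apply NAg. Qed.

Lemma derived_subgroup : is_subgroup G (derived G).
Proof.
  split; [| split].
  - intros S [S1 _] _. exact S1.
  - intros x y Dx Dy S SS Sc. pose proof SS as [_ [mulS _]].
    apply mulS; [apply Dx | apply Dy]; assumption.
  - intros x Dx S SS Sc. pose proof SS as [_ [_ invS]].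
    apply invS, Dx; assumption.
Qed.

Lemma whole_subgroup : is_subgroup G (whole G).
Proof. repeat split. Qed.

(* The conjugate [h^k] is [h] times a commutator, hence stays in G'. *)
Lemma derived_normal : normal_in G (derived G) (whole G).
Proof.
  split; [exact derived_subgroup | split; [exact whole_subgroup | split]].
  - intros; exact I.
  - intros k h _ Dh S SS Sc. rewrite conjg_mulR.
    pose proof SS as [_ [mulS _]].
    apply mulS; [apply Dh | apply Sc]; assumption.
Qed.

Lemma normal_subnormal A : normal_in G A (whole G) -> subnormal G A.
Proof.
  intro nA. exists 1, (fun i => match i with 0 => A | _ => whole G end).
  split; [tauto | split; [intros; exact I |]].
  intros i lti. replace i with 0 by lia. exact nA.
Qed.

Lemma not_perfect_derived_proper : ~ perfect G -> proper G (derived G).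
Proof. intro nP. apply not_all_ex_not. exact nP. Qed.

Hypothesis YnG : in_Yn G.

Lemma Yn_subnormal_nonabelian_whole A :
  is_subgroup G A -> subnormal G A -> ~ abelian_set G A -> forall x, A x.
Proof.
  intros sA [n [C [C0 [Cn chainC]]]] nabA.
  assert (CA : forall i, i <= n -> forall x, C i x <-> A x).
  { induction i as [| i IH]; intros lein x; [exact (C0 x) |].
    assert (eqCA := IH ltac:(lia)).
    assert (nC := chainC i ltac:(lia)).
    pose proof nC as [_ [_ [subC _]]].
    split.
    - intro Cx. apply (proj1 (YnG A sA nabA x)), (normalizer_ext (C i) A x eqCA).
      exact (normal_in_normalizer _ _ x nC Cx).
    - intro Ax. apply subC, eqCA, Ax. }
  intro x. apply (CA n (le_n n)), Cn.
Qed.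

Lemma Yn_subnormal_proper_abelian A :
  is_subgroup G A -> subnormal G A -> proper G A -> abelian_set G A.
Proof.
  intros sA snA [g nAg]. apply NNPP. intro nabA.
  exact (nAg (Yn_subnormal_nonabelian_whole A sA snA nabA g)).
Qed.

End Subgroups.

Theorem proposition2p2 (G : group) (HG : in_Yn G) :
  (forall H : subset G, is_subgroup G H -> subnormal G H -> proper G H ->
     abelian_set G H) /\
  (~ perfect G -> metabelian G).
Proof.
  split.
  - exact (Yn_subnormal_proper_abelian G HG).
  - intro nP. apply (Yn_subnormal_proper_abelian G HG).
    + exact (derived_subgroup G).
    + exact (normal_subnormal G _ (derived_normal G)).
    + exact (not_perfect_derived_proper G nP).
Qed.
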